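(* Let $G=\mathbb{Z}_{d_1}\times\cdots\times\mathbb{Z}_{d_m}$ and $N=\mathbb{Z}_{d'_1}\times\cdots\times\mathbb{Z}_{d'_{m'}}$ be groups of the same order $n$, and let $f:G\to\tilde N$ be a function. For $r\in N$ and $k\in G$ define $v^{(r)}_k\in\mathbb{C}^G$ by $$(v^{(r)}_k)_\ell=\frac1{\sqrt n}\,\chi_k(\ell)\,\chi_r(f(\ell)),\qquad \ell\in G,$$ and let $M_r$ be the $n\times n$ matrix with columns $v^{(r)}_k$, $k\in G$. Then $\{M_r: r\in N\}$ is a complete system of mutually unbiased Hadamards if and only if for all $g_1,g_2,g_3,g_4\in G$ with $g_1+g_2=g_3+g_4$ and $\{g_1,g_2\}\neq\{g_3,g_4\}$ (as multisets) we have $f(g_1)+f(g_2)-f(g_3)-f(g_4)\in\tilde N^*$.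
   Context: $\mathbb{R}_d$ is the additive group of reals modulo $d$; $\tilde N=\mathbb{R}_{d'_1}\times\cdots\times\mathbb{R}_{d'_{m'}}\supseteq N$. For $a\in G$, $b\in G$: $\chi_a(b)=\exp(\sum_{j}\frac{2\pi i}{d_j}a_jb_j)$; for $r\in N$, $x\in\tilde N$: $\chi_r(x)=\exp(\sum_j\frac{2\pi i}{d'_j}r_jx_j)$. $\tilde N^*$ is the set of $x\in\tilde N$ having at least one component $x_j$ that is an integer not congruent to $0$ mod $d'_j$. A complex Hadamard matrix is a unitary $n\times n$ matrix all of whose entries have absolute value $1/\sqrt n$; two are mutually unbiased if $|\langle x|y\rangle|=1/\sqrt n$ for every column $x$ of one and column $y$ of the other; a complete system of mutually unbiased Hadamards is a set of $n$ pairwise mutually unbiased complex Hadamard $n\times n$ matrices. *)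

From mathcomp Require Import all_boot.
From Stdlib Require Import Reals ZArith.
Set Implicit Arguments. Unset Strict Implicit. Unset Printing Implicit Defensive.

(* The group Z_{d_1} x ... x Z_{d_m}: elements are tuples of residues a_j < d_j. *)
Definition Zprod (m : nat) (d : 'I_m -> nat) : finType :=
  {dffun forall j : 'I_m, 'I_(d j)}.

Definition Zsum_eq (m : nat) (d : 'I_m -> nat) (g1 g2 g3 g4 : Zprod d) : Prop :=
  forall j : 'I_m, ((g1 j + g2 j) %% d j = (g3 j + g4 j) %% d j)%nat.

Record Cplx := mkC { Re : R; Im : R }.
Definition C0 : Cplx := mkC 0 0.
Definition C1 : Cplx := mkC 1 0.
Definition Cadd (z w : Cplx) : Cplx := mkC (Re z + Re w) (Im z + Im w).
Definition Cmul (z w : Cplx) : Cplx :=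
  mkC (Re z * Re w - Im z * Im w) (Re z * Im w + Im z * Re w).
Definition Cconj (z : Cplx) : Cplx := mkC (Re z) (- Im z).
Definition Cscale (a : R) (z : Cplx) : Cplx := mkC (a * Re z) (a * Im z).
Definition Cmod (z : Cplx) : R := sqrt (Re z * Re z + Im z * Im z).
Definition Cexpi (t : R) : Cplx := mkC (cos t) (sin t).

Definition Rsum (I : finType) (F : I -> R) : R := \big[Rplus/0%R]_(i : I) F i.
Definition Csum (I : finType) (F : I -> Cplx) : Cplx := \big[Cadd/C0]_(i : I) F i.

Definition chiG (m : nat) (d : 'I_m -> nat) (a b : Zprod d) : Cplx :=
  Cexpi (Rsum (fun j : 'I_m =>
    2 * PI * INR (a j) * INR (b j) / INR (d j)))%R.

(* Elements of tilde N = R_{d'_1} x ... x R_{d'_m'} are represented by real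
   representatives x : 'I_m' -> R (everything used below is invariant under
   changing x_j by multiples of d'_j). chi_r(x) = exp(sum_j 2 pi i r_j x_j / d'_j). *)
Definition chiN (m' : nat) (d' : 'I_m' -> nat) (r : Zprod d') (x : 'I_m' -> R) : Cplx :=
  Cexpi (Rsum (fun j : 'I_m' => 2 * PI * INR (r j) * x j / INR (d' j)))%R.

Definition in_Nstar (m' : nat) (d' : 'I_m' -> nat) (x : 'I_m' -> R) : Prop :=
  exists (j : 'I_m') (z : Z), x j = IZR z /\ ~ (Z.divide (Z.of_nat (d' j)) z).

(* Square complex matrices indexed by a finite type I: U i j = entry row i, column j. *)
Definition cmatrix (I : finType) := I -> I -> Cplx.

Definition col_inner (I : finType) (U V : cmatrix I) (k k' : I) : Cplx :=
  Csum (fun l : I => Cmul (Cconj (U l k)) (V l k')).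

Definition unitary (I : finType) (U : cmatrix I) : Prop :=
  forall k k' : I, col_inner U U k k' = if k == k' then C1 else C0.

Definition complex_hadamard (I : finType) (U : cmatrix I) : Prop :=
  unitary U /\ forall i j : I, Cmod (U i j) = (1 / sqrt (INR #|I|))%R.

Definition mutually_unbiased (I : finType) (U V : cmatrix I) : Prop :=
  forall k k' : I, Cmod (col_inner U V k k') = (1 / sqrt (INR #|I|))%R.

(* {M_r : r in J} is a complete system of mutually unbiased Hadamards:
   #|I| = n distinct matrices (indexed injectively by J with #|J| = n),
   each a complex Hadamard, pairwise mutually unbiased. *)
Definition complete_MUH (I J : finType) (M : J -> cmatrix I) : Prop :=
  #|J| = #|I| /\
  (forall r r', (forall i j, M r i j = M r' i j) -> r = r') /\
  (forall r, complex_hadamard (M r)) /\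
  (forall r r', r <> r' -> mutually_unbiased (M r) (M r')).

Definition Mr (m m' : nat) (d : 'I_m -> nat) (d' : 'I_m' -> nat) (n : nat)
  (f : Zprod d -> ('I_m' -> R)) (r : Zprod d') : cmatrix (Zprod d) :=
  fun l k => Cscale (1 / sqrt (INR n))%R (Cmul (chiG k l) (chiN r (f l))).

(* Proof by a fourth-moment identity.  Let I = I(r, r', k, k') be the inner
   product of column k of M_r with column k' of M_r', and A(x) = sum_r chi_r(x).
   Orthogonality of the characters of G makes each M_r unitary and gives
   Parseval's identity sum_k' |I|^2 = 1.  Expanding |I|^4 over quadruples of G
   and summing over r, r', k, k' keeps only the balanced quadruples
   g1 + g2 = g3 + g4, each weighted by |A(f g1 + f g2 - f g3 - f g4)|^2.
   Removing the trivial ones ({g1, g2} = {g3, g4}) leaves the balance identity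
     sum_{r <> r'} sum_{k,k'} (|I|^2 - 1/n)^2 = n^-2 sum_{nontrivial} |A(x)|^2
   between two sums of nonnegative terms: the left one vanishes iff the M_r
   are pairwise unbiased, the right one iff every A(x) = 0, i.e. (factoring A
   into geometric sums) iff every x lies in tilde N^*. *)

From HB Require Import structures.
From mathcomp Require Import all_boot zify.
From Stdlib Require Import Reals ZArith Lra Lia Classical.
(* Imported last so that Defs.C1 is not shadowed by Stdlib's C1. *)
From Pilot Require Import Defs.
Set Implicit Arguments. Unset Strict Implicit. Unset Printing Implicit Defensive.

Local Open Scope R_scope.

Lemma Cext (z w : Cplx) : Re z = Re w -> Im z = Im w -> z = w.
Proof. by case: z; case: w => ? ? ? ? /= -> ->. Qed.

Lemma CaddA : associative Cadd. Proof. by move=> ? ? ?; apply: Cext => /=; ring. Qed.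
Lemma CaddC : commutative Cadd. Proof. by move=> ? ?; apply: Cext => /=; ring. Qed.
Lemma Cadd0 : left_id C0 Cadd. Proof. by move=> ?; apply: Cext => /=; ring. Qed.
Lemma CmulA : associative Cmul. Proof. by move=> ? ? ?; apply: Cext => /=; ring. Qed.
Lemma CmulC : commutative Cmul. Proof. by move=> ? ?; apply: Cext => /=; ring. Qed.
Lemma Cmul1 : left_id C1 Cmul. Proof. by move=> ?; apply: Cext => /=; ring. Qed.
Lemma Cmul0l : left_zero C0 Cmul. Proof. by move=> ?; apply: Cext => /=; ring. Qed.
Lemma Cmul0r : right_zero C0 Cmul. Proof. by move=> ?; apply: Cext => /=; ring. Qed.
Lemma CmulDl : left_distributive Cmul Cadd.
Proof. by move=> ? ? ?; apply: Cext => /=; ring. Qed.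
Lemma CmulDr : right_distributive Cmul Cadd.
Proof. by move=> ? ? ?; apply: Cext => /=; ring. Qed.

HB.instance Definition _ := Monoid.isComLaw.Build Cplx C0 Cadd CaddA CaddC Cadd0.
HB.instance Definition _ := Monoid.isComLaw.Build Cplx C1 Cmul CmulA CmulC Cmul1.
HB.instance Definition _ := Monoid.isMulLaw.Build Cplx C0 Cmul Cmul0l Cmul0r.
HB.instance Definition _ := Monoid.isAddLaw.Build Cplx Cmul Cadd CmulDl CmulDr.

Lemma RplusA : associative Rplus. Proof. by move=> ? ? ?; ring. Qed.
Lemma RplusC : commutative Rplus. Proof. by move=> ? ?; ring. Qed.
Lemma Rplus0 : left_id 0 Rplus. Proof. by move=> ?; ring. Qed.
Lemma RmultA : associative Rmult. Proof. by move=> ? ? ?; ring. Qed.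
Lemma RmultC : commutative Rmult. Proof. by move=> ? ?; ring. Qed.
Lemma Rmult1 : left_id 1 Rmult. Proof. by move=> ?; ring. Qed.
Lemma Rmult0l : left_zero 0 Rmult. Proof. by move=> ?; ring. Qed.
Lemma Rmult0r : right_zero 0 Rmult. Proof. by move=> ?; ring. Qed.
Lemma RmultDl : left_distributive Rmult Rplus. Proof. by move=> ? ? ?; ring. Qed.
Lemma RmultDr : right_distributive Rmult Rplus. Proof. by move=> ? ? ?; ring. Qed.

HB.instance Definition _ := Monoid.isComLaw.Build R 0 Rplus RplusA RplusC Rplus0.
HB.instance Definition _ := Monoid.isComLaw.Build R 1 Rmult RmultA RmultC Rmult1.
HB.instance Definition _ := Monoid.isMulLaw.Build R 0 Rmult Rmult0l Rmult0r.
HB.instance Definition _ := Monoid.isAddLaw.Build R Rmult Rplus RmultDl RmultDr.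

Definition Cnorm2 (z : Cplx) : R := Re z * Re z + Im z * Im z.

Lemma Cmod_Cnorm2 (z : Cplx) : Cmod z = sqrt (Cnorm2 z).
Proof. by []. Qed.

Lemma Cnorm2_mul (z w : Cplx) : Cnorm2 (Cmul z w) = Cnorm2 z * Cnorm2 w.
Proof. rewrite /Cnorm2 /=; ring. Qed.

Lemma Cnorm2_scale (a : R) (z : Cplx) : Cnorm2 (Cscale a z) = a * a * Cnorm2 z.
Proof. rewrite /Cnorm2 /=; ring. Qed.

Lemma Cnorm2_ge0 (z : Cplx) : 0 <= Cnorm2 z.
Proof. rewrite /Cnorm2; nra. Qed.

Lemma Cnorm2_eq0 (z : Cplx) : Cnorm2 z = 0 -> z = C0.
Proof. by rewrite /Cnorm2 => h; apply: Cext => /=; nra. Qed.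

Lemma Cmul_conj (z : Cplx) : Cmul (Cconj z) z = mkC (Cnorm2 z) 0.
Proof. by apply: Cext; rewrite /Cnorm2 /=; ring. Qed.

Lemma Cmul_eq0 (z w : Cplx) : Cmul z w = C0 -> z = C0 \/ w = C0.
Proof.
move=> zw0; have : Cnorm2 z * Cnorm2 w = 0 by rewrite -Cnorm2_mul zw0 /Cnorm2 /=; ring.
by case/Rmult_integral => /Cnorm2_eq0; [left | right].
Qed.

Lemma Cexpi_add (a b : R) : Cexpi (a + b) = Cmul (Cexpi a) (Cexpi b).
Proof. by apply: Cext => /=; [rewrite cos_plus | rewrite sin_plus]; ring. Qed.

Lemma Cexpi_sub (a b : R) : Cexpi (a - b) = Cmul (Cconj (Cexpi b)) (Cexpi a).
Proof. by apply: Cext; rewrite /Rminus /= ?cos_plus ?sin_plus cos_neg sin_neg; ring. Qed.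

Lemma Cexpi0 : Cexpi 0 = C1.
Proof. by apply: Cext; rewrite /= ?cos_0 ?sin_0. Qed.

Lemma Cnorm2_Cexpi (a : R) : Cnorm2 (Cexpi a) = 1.
Proof. rewrite /Cnorm2 /=; have := sin2_cos2 a; rewrite /Rsqr; lra. Qed.

Lemma Cexpi_2PI_int (z : Z) : Cexpi (2 * PI * IZR z) = C1.
Proof.
have s0 : sin (IZR z * PI) = 0 by apply: sin_eq_0_1; exists z.
have -> : 2 * PI * IZR z = 2 * (IZR z * PI) by ring.
by apply: Cext; rewrite /= ?cos_2a_sin ?sin_2a s0; ring.
Qed.

Lemma Cexpi_eq1 (a : R) : Cexpi a = C1 -> exists k : Z, a = 2 * PI * IZR k.
Proof.
move=> ea1; have ca : cos a = 1 by rewrite -[cos a]/(Re (Cexpi a)) ea1.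
have : sin (a / 2) = 0.
  have := cos_2a_sin (a / 2); have -> : 2 * (a / 2) = a by field.
  by rewrite ca => e; apply: Rsqr_0_uniq; rewrite /Rsqr; lra.
by case/sin_eq_0_0 => k hk; exists k; lra.
Qed.

Section FiniteSums.
Variables I J : finType.

Lemma Rsum_ext (F G : I -> R) : (forall i, F i = G i) -> Rsum F = Rsum G.
Proof. by move=> FG; apply: eq_bigr. Qed.

Lemma Csum_ext (F G : I -> Cplx) : (forall i, F i = G i) -> Csum F = Csum G.
Proof. by move=> FG; apply: eq_bigr. Qed.

Lemma Rsum_add (F G : I -> R) : Rsum (fun i => F i + G i) = Rsum F + Rsum G.
Proof. exact: big_split. Qed.

Lemma Rsum_mull (a : R) (F : I -> R) : a * Rsum F = Rsum (fun i => a * F i).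
Proof. exact: big_distrr. Qed.

Lemma Rsum_sub (F G : I -> R) : Rsum (fun i => F i - G i) = Rsum F - Rsum G.
Proof.
have -> : Rsum F - Rsum G = Rsum F + (-1) * Rsum G by ring.
by rewrite Rsum_mull -Rsum_add; apply: Rsum_ext => i; ring.
Qed.

Lemma Rsum_const (c : R) : Rsum (fun _ : I => c) = INR #|I| * c.
Proof.
rewrite /Rsum big_const cardE; elim: (size _) => [|k IHk]; first by rewrite /=; ring.
by rewrite iterS IHk S_INR; ring.
Qed.

Lemma Rsum_ge0 (F : I -> R) : (forall i, 0 <= F i) -> 0 <= Rsum F.
Proof.
move=> F_ge0; apply: (big_ind (fun x => 0 <= x)) => //; first exact: Rle_refl.
by move=> x y; lra.
Qed.

Lemma Rsum_eq0 (F : I -> R) :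
  (forall i, 0 <= F i) -> Rsum F = 0 <-> forall i, F i = 0.
Proof.
move=> F_ge0; split=> [sum0 i|F0]; last by rewrite /Rsum big1.
have : 0 <= \big[Rplus/0]_(j | j != i) F j.
  by apply: (big_ind (fun x => 0 <= x)) => // [|x y]; [exact: Rle_refl | lra].
by move: sum0; rewrite /Rsum (bigD1 i) //=; have := F_ge0 i; lra.
Qed.

Lemma Rsum_delta (a : I) (u : R) : Rsum (fun i => if i == a then u else 0) = u.
Proof.
rewrite /Rsum (bigD1 a) //= eqxx big1 => [|i /negbTE ->]; [ring | done].
Qed.

Lemma Rsum_pair (F : I * J -> R) :
  Rsum F = Rsum (fun i => Rsum (fun j => F (i, j))).
Proof. by rewrite /Rsum pair_bigA; apply: eq_bigr => -[]. Qed.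

Lemma Csum_Re (F : I -> Cplx) : Re (Csum F) = Rsum (fun i => Re (F i)).
Proof. exact: (big_morph Re (id1 := 0) (op1 := Rplus)). Qed.

Lemma Csum_scale (a : R) (F : I -> Cplx) :
  Cscale a (Csum F) = Csum (fun i => Cscale a (F i)).
Proof.
apply: (big_morph (Cscale a) (id1 := C0) (op1 := Cadd)).
  by move=> x y; apply: Cext => /=; ring.
by apply: Cext => /=; ring.
Qed.

Lemma Csum_conj (F : I -> Cplx) : Cconj (Csum F) = Csum (fun i => Cconj (F i)).
Proof.
apply: (big_morph Cconj (id1 := C0) (op1 := Cadd)).
  by move=> x y; apply: Cext => /=; ring.
by apply: Cext => /=; ring.
Qed.

Lemma Csum_mull (a : Cplx) (F : I -> Cplx) :
  Cmul a (Csum F) = Csum (fun i => Cmul a (F i)).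
Proof. exact: big_distrr. Qed.

Lemma Csum_mulr (a : Cplx) (F : I -> Cplx) :
  Cmul (Csum F) a = Csum (fun i => Cmul (F i) a).
Proof. exact: big_distrl. Qed.

Lemma Csum_mul (F : I -> Cplx) (G : J -> Cplx) :
  Cmul (Csum F) (Csum G) = Csum (fun p : I * J => Cmul (F p.1) (G p.2)).
Proof. by rewrite /Csum big_distrlr pair_bigA. Qed.

Lemma Csum_swap (F : I -> J -> Cplx) :
  Csum (fun i => Csum (fun j => F i j)) = Csum (fun j => Csum (fun i => F i j)).
Proof. exact: exchange_big. Qed.

Lemma Rsum_two_points (x y : I) :
  Rsum (fun i => if (i == x) || (i == y) then 1 else 0) = if y == x then 1 else 2.
Proof.
case: eqP => [-> | yx]; first by under Rsum_ext => i do rewrite orbb; exact: Rsum_delta.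
rewrite (Rsum_ext (G := fun i => (if i == x then 1 else 0) + (if i == y then 1 else 0))).
  by rewrite Rsum_add !Rsum_delta; ring.
move=> i; case: (eqVneq i x) => [-> | _] /=; last by case: (i == y); ring.
by rewrite eq_sym (introF eqP yx); ring.
Qed.

End FiniteSums.

Lemma Cexpi_Rsum (I : finType) (t : I -> R) :
  Cexpi (Rsum t) = \big[Cmul/C1]_i Cexpi (t i).
Proof. exact: (big_morph Cexpi Cexpi_add Cexpi0). Qed.

Lemma expsum_norm2 (I : finType) (phi : I -> R) :
  Csum (fun q : I * I => Cexpi (phi q.2 - phi q.1)) =
  mkC (Cnorm2 (Csum (fun i => Cexpi (phi i)))) 0.
Proof.
rewrite -Cmul_conj Csum_conj Csum_mul; apply: Csum_ext => q; exact: Cexpi_sub.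
Qed.

Lemma inv_sqrt_sq (a : R) : 0 < a -> 1 / sqrt a * (1 / sqrt a) = / a.
Proof.
move=> a_pos; have sqrt_pos := sqrt_lt_R0 a a_pos.
have sqrt_sq : sqrt a * sqrt a = a by apply: sqrt_sqrt; lra.
by rewrite -{3}sqrt_sq; field; lra.
Qed.

Definition phase (p : nat) (D : 'I_p -> nat) (r : Zprod D) (x : 'I_p -> R) : R :=
  Rsum (fun j => 2 * PI * INR (r j) * x j / INR (D j)).

Definition rvec (p : nat) (D : 'I_p -> nat) (l : Zprod D) : 'I_p -> R :=
  fun j => INR (l j).

Definition charsum (p : nat) (D : 'I_p -> nat) (x : 'I_p -> R) : Cplx :=
  Csum (fun r : Zprod D => chiN r x).

Lemma chiN_phase (p : nat) (D : 'I_p -> nat) (r : Zprod D) (x : 'I_p -> R) :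
  chiN r x = Cexpi (phase r x).
Proof. by []. Qed.

Lemma chiG_phase (p : nat) (D : 'I_p -> nat) (k l : Zprod D) :
  chiG k l = Cexpi (phase k (rvec l)).
Proof. by []. Qed.

Lemma charsum_ext (p : nat) (D : 'I_p -> nat) (x y : 'I_p -> R) :
  (forall j, x j = y j) -> charsum D x = charsum D y.
Proof.
move=> xy; apply: Csum_ext => r; rewrite !chiN_phase; congr Cexpi.
by apply: Rsum_ext => j; rewrite xy.
Qed.

Lemma charsum_norm2 (p : nat) (D : 'I_p -> nat) (x : 'I_p -> R) :
  Csum (fun rr : Zprod D * Zprod D => Cexpi (phase rr.2 x - phase rr.1 x)) =
  mkC (Cnorm2 (charsum D x)) 0.
Proof. exact: (expsum_norm2 (fun r : Zprod D => phase r x)). Qed.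

Lemma phase_sym (p : nat) (D : 'I_p -> nat) (k l : Zprod D) :
  phase k (rvec l) = phase l (rvec k).
Proof. by apply: Rsum_ext => j; rewrite /rvec /Rdiv; ring. Qed.

Lemma phase_sub (p : nat) (D : 'I_p -> nat) (r : Zprod D) (x y : 'I_p -> R) :
  phase r (fun j => x j - y j) = phase r x - phase r y.
Proof. by rewrite /phase -Rsum_sub; apply: Rsum_ext => j; rewrite /Rdiv; ring. Qed.

Lemma phase_quad (p : nat) (D : 'I_p -> nat) (r : Zprod D) (x1 x2 x3 x4 : 'I_p -> R) :
  phase r (fun j => x1 j + x2 j - x3 j - x4 j) =
  phase r x1 + phase r x2 - phase r x3 - phase r x4.
Proof.
rewrite /phase -Rsum_add -!Rsum_sub; apply: Rsum_ext => j; rewrite /Rdiv; ring.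
Qed.

Lemma card_Zprod (p : nat) (D : 'I_p -> nat) : #|Zprod D| = (\prod_(j < p) D j)%nat.
Proof.
rewrite /Zprod card_dep_ffun foldrE big_map enumT.
by apply: eq_bigr => j _; rewrite card_ord.
Qed.

Lemma Csum_C1 (I : finType) : Csum (fun _ : I => C1) = mkC (INR #|I|) 0.
Proof.
rewrite /Csum big_const cardE; elim: (size _) => [|k IHk]; first by [].
by rewrite iterS IHk S_INR; apply: Cext => /=; ring.
Qed.

Lemma Csum_dprod (p : nat) (D : 'I_p -> nat) (HD : forall j, (0 < D j)%nat)
    (F : forall j, 'I_(D j) -> Cplx) :
  Csum (fun r : Zprod D => \big[Cmul/C1]_j F j (r j)) =
  \big[Cmul/C1]_j Csum (fun s : 'I_(D j) => F j s).
Proof.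
(* Embed every 'I_(D j) into the common type 'I_M, M = max_j D j, to apply
   the non-dependent distributivity law bigA_distr_big_dep. *)
pose M := (\max_(j : 'I_p) D j)%nat.
have leM j : (D j <= M)%nat := leq_bigmax j.
pose narrow j (s : 'I_M) : 'I_(D j) := Ordinal (ltn_pmod s (HD j)).
have narrowK j (s : 'I_(D j)) : narrow j (widen_ord (leM j) s) = s.
  by apply: val_inj; rewrite /= modn_small.
pose G j (s : 'I_M) := F j (narrow j s).
have sum_narrow j : Csum (fun s : 'I_(D j) => F j s) =
    \big[Cadd/C0]_(s < M | (true && (s < D j))%nat) G j s.
  rewrite (big_ord_narrow_cond (leM j)); apply: eq_bigr => s _.
  by rewrite /G narrowK.
under [RHS]eq_bigr => j _ do rewrite sum_narrow.
rewrite (bigA_distr_big_dep (fun j (s : 'I_M) => (s < D j)%nat) G).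
pose widen (r : Zprod D) : {ffun 'I_p -> 'I_M} := [ffun j => widen_ord (leM j) (r j)].
pose unwiden (g : {ffun 'I_p -> 'I_M}) : Zprod D := [ffun j => narrow j (g j)].
rewrite (reindex widen); last first.
  exists unwiden => [r _ | g]; first by apply/ffunP => j; rewrite !ffunE narrowK.
  rewrite inE => /forallP g_lt; apply/ffunP => j; rewrite !ffunE.
  by apply: val_inj; rewrite /= modn_small //; move: (g_lt j); rewrite unfold_in.
rewrite /Csum; apply: eq_big => [r | r _].
  by apply/esym/forallP => j; rewrite ffunE /= unfold_in /=.
by apply: eq_bigr => j _; rewrite /G ffunE narrowK.
Qed.

Definition cycsum (D : nat) (x : R) : Cplx :=
  \big[Cadd/C0]_(s < D) Cexpi (2 * PI * INR s * x / INR D).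

Definition Cone_minus (z : Cplx) : Cplx := mkC (1 - Re z) (- Im z).

Lemma Cone_minus_eq0 (z : Cplx) : Cone_minus z = C0 <-> z = C1.
Proof.
split=> [z0 | ->]; last by apply: Cext => /=; ring.
by move: (congr1 Re z0) (congr1 Im z0) => /= re im; apply: Cext => /=; lra.
Qed.

Lemma INR_pos (D : nat) : (0 < D)%nat -> 0 < INR D.
Proof. by move=> D_gt0; apply: lt_0_INR; apply/ltP. Qed.

Lemma geometric_sum (D : nat) (t : R) :
  Cmul (Cone_minus (Cexpi t)) (\big[Cadd/C0]_(s < D) Cexpi (INR s * t)) =
  Cone_minus (Cexpi (INR D * t)).
Proof.
elim: D => [|D IHD].
  by rewrite big_ord0; apply: Cext; rewrite /= Rmult_0_l ?cos_0 ?sin_0; ring.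
rewrite big_ord_recr CmulDr IHD S_INR Rmult_plus_distr_r Rmult_1_l /=.
by apply: Cext; rewrite /= ?cos_plus ?sin_plus; ring.
Qed.

Lemma cycsum_geometric (D : nat) (x : R) : (0 < D)%nat ->
  Cmul (Cone_minus (Cexpi (2 * PI * x / INR D))) (cycsum D x) =
  Cone_minus (Cexpi (2 * PI * x)).
Proof.
move=> /INR_pos D_pos; set t := 2 * PI * x / INR D.
have -> : 2 * PI * x = INR D * t by rewrite /t; field; lra.
rewrite -geometric_sum; congr Cmul; apply: eq_bigr => s _.
by congr Cexpi; rewrite /t; field; lra.
Qed.

Lemma cycsum_full (D : nat) (x : R) (t : Z) :
  (0 < D)%nat -> x = IZR t * INR D -> cycsum D x = mkC (INR D) 0.
Proof.
move=> /INR_pos D_pos ->; rewrite -[in RHS](card_ord D) -Csum_C1.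
apply: eq_bigr => s _.
have -> : 2 * PI * INR s * (IZR t * INR D) / INR D = 2 * PI * IZR (Z.of_nat s * t).
  by rewrite mult_IZR -INR_IZR_INZ; field; lra.
exact: Cexpi_2PI_int.
Qed.

Lemma cycsum_eq0 (D : nat) (x : R) : (0 < D)%nat ->
  cycsum D x = C0 <-> exists z : Z, x = IZR z /\ ~ (Z.of_nat D | z)%Z.
Proof.
move=> D_gt0; have D_pos := INR_pos D_gt0; have PI_pos := PI_RGT_0.
have geom := cycsum_geometric x D_gt0.
split=> [sum0 | [z [xz z_ndvd]]].
  have /Cexpi_eq1 [z xz] : Cexpi (2 * PI * x) = C1.
    by apply/Cone_minus_eq0; rewrite -geom sum0 Cmul0r.
  have {}xz : x = IZR z by nra.
  exists z; split=> // -[q zq]; move: sum0.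
  rewrite (cycsum_full (t := q) D_gt0) ?xz ?zq ?mult_IZR -?INR_IZR_INZ //.
  by move/(congr1 Re) => /=; lra.
have t_not_int : Cexpi (2 * PI * x / INR D) <> C1.
  case/Cexpi_eq1 => k xk; apply: z_ndvd; exists k; apply: eq_IZR.
  rewrite mult_IZR -INR_IZR_INZ -xz.
  have -> : x = (2 * PI * x / INR D) * INR D / (2 * PI) by field; lra.
  by rewrite xk; field; lra.
have : Cmul (Cone_minus (Cexpi (2 * PI * x / INR D))) (cycsum D x) = C0.
  by rewrite geom xz Cexpi_2PI_int; apply/Cone_minus_eq0.
by case/Cmul_eq0 => // /Cone_minus_eq0.
Qed.

Lemma eqn_mod_divZ (D a b : nat) : (0 < D)%nat ->
  (a %% D = b %% D)%nat <-> (Z.of_nat D | Z.of_nat a - Z.of_nat b)%Z.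
Proof.
move=> D_gt0; have := divn_eq a D; have := divn_eq b D.
have := ltn_pmod a D_gt0; have := ltn_pmod b D_gt0.
move: (a %/ D)%nat (b %/ D)%nat (a %% D)%nat (b %% D)%nat => qa qb ra rb ra_lt rb_lt -> ->.
split=> [-> | [t ht]]; first by exists (Z.of_nat qa - Z.of_nat qb)%Z; lia.
have : (t = Z.of_nat qa - Z.of_nat qb)%Z by nia.
lia.
Qed.

Section CharacterSums.
Variables (p : nat) (D : 'I_p -> nat).
Hypothesis HD : forall j, (0 < D j)%nat.

Lemma charsum_prod (x : 'I_p -> R) :
  charsum D x = \big[Cmul/C1]_j cycsum (D j) (x j).
Proof.
rewrite -(Csum_dprod HD (fun j s => Cexpi (2 * PI * INR s * x j / INR (D j)))).
by apply: Csum_ext => r; rewrite /chiN Cexpi_Rsum.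
Qed.

Lemma charsum_full (x : 'I_p -> R) :
  (forall j, exists t : Z, x j = IZR t * INR (D j)) ->
  charsum D x = mkC (INR #|Zprod D|) 0.
Proof.
move=> x_lattice; rewrite charsum_prod card_Zprod.
rewrite (eq_bigr (fun j => mkC (INR (D j)) 0)) => [|j _]; last first.
  by have [t xt] := x_lattice j; exact: cycsum_full xt.
rewrite (big_morph (fun k => mkC (INR k) 0) (id1 := C1) (op1 := Cmul)
  (id2 := 1%nat) (op2 := muln)) //.
by move=> a b; rewrite -multE mult_INR; apply: Cext => /=; ring.
Qed.

Lemma charsum_eq0 (x : 'I_p -> R) : charsum D x = C0 <-> in_Nstar D x.
Proof.
rewrite charsum_prod; split=> [prod0 | [j [z [xz z_ndvd]]]].
  apply: NNPP => notNstar.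
  have : \big[Cmul/C1]_j cycsum (D j) (x j) <> C0; last by [].
  apply: (big_ind (fun w => w <> C0)).
  - by move/(congr1 Re) => /=; lra.
  - by move=> a b a0 b0 /Cmul_eq0 [].
  - by move=> j _ /(cycsum_eq0 _ (HD j)) [z xz]; apply: notNstar; exists j, z.
rewrite (bigD1 j) //= (proj2 (cycsum_eq0 _ (HD j))) ?Cmul0l //.
by exists z.
Qed.

Lemma charsum_diff (a b : 'I_p -> nat) :
  charsum D (fun j => INR (a j) - INR (b j)) =
  if [forall j, a j %% D j == b j %% D j] then mkC (INR #|Zprod D|) 0 else C0.
Proof.
have diffZ j : INR (a j) - INR (b j) = IZR (Z.of_nat (a j) - Z.of_nat (b j)).
  by rewrite minus_IZR -!INR_IZR_INZ.
case: ifP => [/forallP cong | /negbT /forallPn [j ncong]].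
  apply: charsum_full => j; have [t ht] := (eqn_mod_divZ _ _ (HD j)).1 (eqP (cong j)).
  by exists t; rewrite diffZ ht mult_IZR -INR_IZR_INZ.
apply/charsum_eq0; exists j, (Z.of_nat (a j) - Z.of_nat (b j))%Z; split; first exact: diffZ.
by move/(eqn_mod_divZ _ _ (HD j))/eqP; apply/negP.
Qed.

End CharacterSums.

Section MutuallyUnbiased.
Variables (m m' : nat) (d : 'I_m -> nat) (d' : 'I_m' -> nat) (n : nat).
Hypothesis Hd : forall j, (0 < d j)%nat.
Hypothesis Hd' : forall j, (0 < d' j)%nat.
Hypothesis HG : #|Zprod d| = n.
Hypothesis HN : #|Zprod d'| = n.
Variable f : Zprod d -> 'I_m' -> R.

Local Notation G := (Zprod d).
Local Notation N := (Zprod d').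

Lemma n_pos : 0 < INR n.
Proof. by rewrite -HG; apply: INR_pos; apply/card_gt0P; exists [ffun j => Ordinal (Hd j)]. Qed.

Definition cross (r r' : N) (k k' : G) : Cplx := col_inner (Mr n f r) (Mr n f r') k k'.

Definition expo (r r' : N) (k k' : G) (l : G) : R :=
  (phase k' (rvec l) + phase r' (f l)) - (phase k (rvec l) + phase r (f l)).

Lemma cross_expsum (r r' : N) (k k' : G) :
  cross r r' k k' = Cscale (/ INR n) (Csum (fun l => Cexpi (expo r r' k k' l))).
Proof.
rewrite /cross /col_inner Csum_scale -(inv_sqrt_sq n_pos); apply: Csum_ext => l.
rewrite /Mr /expo !chiG_phase !chiN_phase Cexpi_sub !Cexpi_add.
by apply: Cext => /=; ring.
Qed.

Lemma charsum_rvec (k k' : G) :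
  charsum d (fun j => rvec k' j - rvec k j) = if k' == k then mkC (INR n) 0 else C0.
Proof.
rewrite (charsum_diff Hd (fun j => k' j) (fun j => k j)) HG.
congr (if _ then _ else _); apply/forallP/eqP => [cong | -> j //].
apply/ffunP => j; apply: val_inj.
by have /eqP := cong j; rewrite !modn_small.
Qed.

Lemma cross_diag (r : N) (k k' : G) : cross r r k k' = if k' == k then C1 else C0.
Proof.
have np := n_pos.
rewrite cross_expsum.
have expoE l : expo r r k k' l = phase l (fun j => rvec k' j - rvec k j).
  by rewrite /expo phase_sub (phase_sym k' l) (phase_sym k l); ring.
rewrite (Csum_ext (fun l => congr1 Cexpi (expoE l))) -[Csum _]/(charsum d _).
by rewrite charsum_rvec; case: eqP => _; apply: Cext => /=; field; lra.
Qed.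

Lemma parseval_inner (r r' : N) (k : G) (q : G * G) :
  Csum (fun k' => Cexpi (expo r r' k k' q.2 - expo r r' k k' q.1)) =
  if q.2 == q.1 then mkC (INR n) 0 else C0.
Proof.
case: eqP => [-> | neq].
  by rewrite -HG -Csum_C1; apply: Csum_ext => k'; rewrite Rminus_diag Cexpi0.
pose c := (phase r' (f q.2) - phase k (rvec q.2) - phase r (f q.2))
        - (phase r' (f q.1) - phase k (rvec q.1) - phase r (f q.1)).
have expoE k' : expo r r' k k' q.2 - expo r r' k k' q.1 =
    phase k' (fun j => rvec q.2 j - rvec q.1 j) + c.
  by rewrite phase_sub /expo /c; ring.
rewrite (Csum_ext (fun k' => congr1 Cexpi (expoE k'))).
rewrite (Csum_ext (fun k' => Cexpi_add _ _)) -Csum_mulr -[Csum _]/(charsum d _).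
by rewrite charsum_rvec (introF eqP neq) Cmul0l.
Qed.

Lemma parseval (r r' : N) (k : G) : Rsum (fun k' => Cnorm2 (cross r r' k k')) = 1.
Proof.
have np := n_pos.
have normE k' : Cnorm2 (cross r r' k k') = / INR n * / INR n *
    Re (Csum (fun q : G * G => Cexpi (expo r r' k k' q.2 - expo r r' k k' q.1))).
  by rewrite cross_expsum Cnorm2_scale (expsum_norm2 (expo r r' k k')).
rewrite (Rsum_ext normE) -Rsum_mull -Csum_Re Csum_swap.
rewrite (Csum_ext (parseval_inner r r' k)) Csum_Re Rsum_pair.
rewrite (Rsum_ext (G := fun _ => INR n)) ?Rsum_const ?HG; first by field; lra.
move=> l1; rewrite -[RHS](Rsum_delta l1); apply: Rsum_ext => l2 /=.
by case: (l2 == l1).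
Qed.

(* Quadruples q = ((g3, g4), (g1, g2)) of elements of G.  q is balanced if
   g1 + g2 = g3 + g4, and trivial if (g1, g2) is (g3, g4) or (g4, g3). *)
Definition balanced (q : (G * G) * (G * G)) : bool :=
  [forall j, ((q.2.1 j + q.2.2 j) %% d j == (q.1.1 j + q.1.2 j) %% d j)%nat].

Definition trivial_quad (q : (G * G) * (G * G)) : bool :=
  (q.2 == q.1) || (q.2 == (q.1.2, q.1.1)).

Definition Yq (q : (G * G) * (G * G)) : 'I_m -> R :=
  fun j => rvec q.2.1 j + rvec q.2.2 j - rvec q.1.1 j - rvec q.1.2 j.

Definition Xq (q : (G * G) * (G * G)) : 'I_m' -> R :=
  fun j => f q.2.1 j + f q.2.2 j - f q.1.1 j - f q.1.2 j.

Lemma balancedP (q : (G * G) * (G * G)) :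
  reflect (Zsum_eq q.2.1 q.2.2 q.1.1 q.1.2) (balanced q).
Proof. by apply: (iffP forallP) => bal j; apply/eqP; exact: bal. Qed.

Lemma trivialP (q : (G * G) * (G * G)) :
  reflect ((q.2.1 = q.1.1 /\ q.2.2 = q.1.2) \/ (q.2.1 = q.1.2 /\ q.2.2 = q.1.1))
          (trivial_quad q).
Proof.
case: q => [[g3 g4] [g1 g2]]; rewrite /trivial_quad /= !xpair_eqE.
apply: (iffP orP) => [[] /andP [/eqP -> /eqP ->] | [] [-> ->]]; auto.
  by left; rewrite !eqxx.
by right; rewrite !eqxx.
Qed.

Lemma charsum_Yq (q : (G * G) * (G * G)) :
  charsum d (Yq q) = if balanced q then mkC (INR n) 0 else C0.
Proof.
rewrite (@charsum_ext _ _ _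
  (fun j => INR (q.2.1 j + q.2.2 j)%nat - INR (q.1.1 j + q.1.2 j)%nat)).
  by rewrite (charsum_diff Hd (fun j => q.2.1 j + q.2.2 j)%nat) HG.
by move=> j; rewrite /Yq /rvec -!plusE !plus_INR; ring.
Qed.

Lemma cross_norm4 (r r' : N) (k k' : G) :
  mkC (Cnorm2 (cross r r' k k') ^ 2) 0 =
  Cscale (/ INR n ^ 4) (Csum (fun q : (G * G) * (G * G) =>
    Cexpi ((phase k' (Yq q) - phase k (Yq q)) + (phase r' (Xq q) - phase r (Xq q))))).
Proof.
pose phi (g : G * G) := expo r r' k k' g.1 + expo r r' k k' g.2.
have sq_expsum : Cmul (Csum (fun l => Cexpi (expo r r' k k' l)))
    (Csum (fun l => Cexpi (expo r r' k k' l))) = Csum (fun g : G * G => Cexpi (phi g)).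
  by rewrite Csum_mul; apply: Csum_ext => g; rewrite /phi Cexpi_add.
have phiE q : phi q.2 - phi q.1 =
    (phase k' (Yq q) - phase k (Yq q)) + (phase r' (Xq q) - phase r (Xq q)).
  by rewrite /phi /expo /Yq /Xq !phase_quad; ring.
rewrite -(Csum_ext (fun q => congr1 Cexpi (phiE q))) (expsum_norm2 phi) -sq_expsum.
rewrite cross_expsum Cnorm2_scale Cnorm2_mul.
by have np := n_pos; apply: Cext => /=; field; lra.
Qed.

Lemma quad_sum (q : (G * G) * (G * G)) :
  Csum (fun rr : N * N => Csum (fun kk : G * G =>
    Cexpi ((phase kk.2 (Yq q) - phase kk.1 (Yq q)) + (phase rr.2 (Xq q) - phase rr.1 (Xq q))))) =
  mkC (if balanced q then INR n ^ 2 * Cnorm2 (charsum d' (Xq q)) else 0) 0.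
Proof.
rewrite (Csum_ext (fun rr => Csum_ext (fun kk => Cexpi_add _ _))).
rewrite (Csum_ext (fun rr => esym (Csum_mulr _ _))) -Csum_mull.
rewrite charsum_norm2 charsum_norm2 charsum_Yq.
by case: (balanced q); apply: Cext; rewrite /Cnorm2 /=; ring.
Qed.

Lemma fourth_moment :
  Rsum (fun rr : N * N => Rsum (fun kk : G * G => Cnorm2 (cross rr.1 rr.2 kk.1 kk.2) ^ 2)) =
  / INR n ^ 2 * Rsum (fun q => if balanced q then Cnorm2 (charsum d' (Xq q)) else 0).
Proof.
have np := n_pos.
transitivity (Re (Csum (fun rr : N * N => Csum (fun kk : G * G =>
    mkC (Cnorm2 (cross rr.1 rr.2 kk.1 kk.2) ^ 2) 0)))).
  by rewrite Csum_Re; apply: Rsum_ext => rr; rewrite Csum_Re.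
rewrite (Csum_ext (fun rr => Csum_ext (fun kk => cross_norm4 rr.1 rr.2 kk.1 kk.2))).
rewrite (Csum_ext (fun rr => esym (Csum_scale _ _))) -Csum_scale.
rewrite (Csum_ext (fun rr => Csum_swap _)) Csum_swap (Csum_ext quad_sum) /=.
rewrite Csum_Re !Rsum_mull; apply: Rsum_ext => q /=.
by case: (balanced q); field; lra.
Qed.

(* There are n (2n - 1) trivial quadruples: for each pair (g3, g4), two choices
   of (g1, g2), which coincide when g3 = g4. *)
Lemma count_trivial :
  Rsum (fun q : (G * G) * (G * G) => if trivial_quad q then 1 else 0) =
  INR n * (2 * INR n - 1).
Proof.
rewrite Rsum_pair (Rsum_ext (fun q1 => Rsum_two_points q1 (q1.2, q1.1))) Rsum_pair.
rewrite (Rsum_ext (G := fun _ => 2 * INR n - 1)) ?Rsum_const ?HG // => g3.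
rewrite (Rsum_ext (G := fun g4 => 2 + (-1) * (if g4 == g3 then 1 else 0))).
  by rewrite Rsum_add Rsum_const -Rsum_mull Rsum_delta HG; ring.
by move=> g4 /=; rewrite xpair_eqE [g3 == g4]eq_sym andbb; case: (g4 == g3); ring.
Qed.

Lemma trivial_balanced (q : (G * G) * (G * G)) :
  trivial_quad q -> balanced q /\ forall j, Xq q j = 0.
Proof.
case/trivialP => -[e1 e2]; (split; [apply/balancedP => j | move=> j]);
  by rewrite /Xq e1 e2 1?addnC //; ring.
Qed.

Definition excess (q : (G * G) * (G * G)) : R :=
  if balanced q && ~~ trivial_quad q then Cnorm2 (charsum d' (Xq q)) else 0.

Lemma fourth_moment_split :
  Rsum (fun rr : N * N => Rsum (fun kk : G * G => Cnorm2 (cross rr.1 rr.2 kk.1 kk.2) ^ 2)) =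
  INR n * (2 * INR n - 1) + / INR n ^ 2 * Rsum excess.
Proof.
have np := n_pos.
rewrite fourth_moment (Rsum_ext (G := fun q =>
  INR n ^ 2 * (if trivial_quad q then 1 else 0) + excess q)).
  by rewrite Rsum_add -Rsum_mull count_trivial; field; lra.
move=> q; rewrite /excess.
case: (boolP (trivial_quad q)) => [/trivial_balanced [-> X0] | _]; last first.
  by rewrite andbT; case: (balanced q); ring.
rewrite (@charsum_ext _ _ _ (fun _ => 0)) // (charsum_full Hd') => [|j]; last by exists 0%Z; ring.
by rewrite HN /Cnorm2 /=; field; lra.
Qed.

(* For r = r' the fourth moment is that of the identity matrix. *)
Lemma moment_diag (r : N) :
  Rsum (fun kk : G * G => Cnorm2 (cross r r kk.1 kk.2) ^ 2) = INR n.
Proof.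
rewrite Rsum_pair (Rsum_ext (G := fun _ => 1)) ?Rsum_const ?HG; first ring.
move=> k; rewrite -[RHS](Rsum_delta k); apply: Rsum_ext => k' /=.
by rewrite cross_diag; case: (k' == k); rewrite /Cnorm2 /=; ring.
Qed.

Definition deviation (r r' : N) : R :=
  Rsum (fun kk : G * G => (Cnorm2 (cross r r' kk.1 kk.2) - / INR n) ^ 2).

(* By Parseval the second moment is fixed, so the deviation is the excess of
   the fourth moment over its minimum 1. *)
Lemma deviationE (r r' : N) :
  deviation r r' = Rsum (fun kk : G * G => Cnorm2 (cross r r' kk.1 kk.2) ^ 2) - 1.
Proof.
have np := n_pos.
suff : deviation r r' - Rsum (fun kk : G * G => Cnorm2 (cross r r' kk.1 kk.2) ^ 2) = - 1.
  by lra.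
rewrite /deviation -Rsum_sub (Rsum_ext (G := fun kk : G * G =>
    (- 2 / INR n) * Cnorm2 (cross r r' kk.1 kk.2) + / INR n ^ 2)); last first.
  by move=> kk; field; lra.
rewrite Rsum_add Rsum_const card_prod HG -multE mult_INR -Rsum_mull Rsum_pair.
rewrite (Rsum_ext (parseval r r')) Rsum_const HG.
by field; lra.
Qed.

Lemma deviation_eq0 (r r' : N) :
  deviation r r' = 0 <-> forall k k', Cnorm2 (cross r r' k k') = / INR n.
Proof.
rewrite /deviation Rsum_eq0 => [|kk]; last exact: pow2_ge_0.
split=> [dev0 k k' | unbiased kk]; last by rewrite unbiased; ring.
by have := dev0 (k, k'); rewrite /=; nra.
Qed.

Lemma balance_identity :
  Rsum (fun rr : N * N => if rr.2 == rr.1 then 0 else deviation rr.1 rr.2) =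
  / INR n ^ 2 * Rsum excess.
Proof.
have np := n_pos.
have termE (rr : N * N) : (if rr.2 == rr.1 then 0 else deviation rr.1 rr.2) =
    Rsum (fun kk : G * G => Cnorm2 (cross rr.1 rr.2 kk.1 kk.2) ^ 2)
    - (1 + (INR n - 1) * (if rr.2 == rr.1 then 1 else 0)).
  by case: eqP => [-> | _]; [rewrite moment_diag | rewrite deviationE]; ring.
rewrite (Rsum_ext termE) Rsum_sub fourth_moment_split Rsum_add Rsum_const card_prod HN.
rewrite -multE mult_INR.
rewrite -Rsum_mull (Rsum_pair (fun rr : N * N => if rr.2 == rr.1 then 1 else 0)).
rewrite (Rsum_ext (fun r => Rsum_delta r 1)) Rsum_const HN.
by field; lra.
Qed.

Lemma unbiased_iff_excess :
  (forall r r' : N, r <> r' -> forall k k', Cnorm2 (cross r r' k k') = / INR n) <->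
  Rsum excess = 0.
Proof.
have np := n_pos.
have dev_ge0 (rr : N * N) : 0 <= if rr.2 == rr.1 then 0 else deviation rr.1 rr.2.
  by case: eqP => _; [exact: Rle_refl | apply: Rsum_ge0 => kk; exact: pow2_ge_0].
have total0 : Rsum (fun rr : N * N => if rr.2 == rr.1 then 0 else deviation rr.1 rr.2) = 0
    <-> Rsum excess = 0.
  rewrite balance_identity; split=> [total0 | ->]; last by ring.
  have -> : Rsum excess = INR n ^ 2 * (/ INR n ^ 2 * Rsum excess) by field; lra.
  by rewrite total0; ring.
apply: (iff_trans _ total0); split=> [unbiased | dev0 r r' rr'].
  apply/(Rsum_eq0 dev_ge0) => -[r r'] /=; case: eqP => // /nesym /unbiased.
  by move/deviation_eq0.
apply/deviation_eq0; have := (Rsum_eq0 dev_ge0).1 dev0 (r, r'); rewrite /=.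
by case: eqP => // e; case: rr'.
Qed.

Lemma excess_eq0 :
  Rsum excess = 0 <->
  (forall g1 g2 g3 g4 : G, Zsum_eq g1 g2 g3 g4 ->
     ~ ((g1 = g3 /\ g2 = g4) \/ (g1 = g4 /\ g2 = g3)) ->
     in_Nstar d' (fun j => f g1 j + f g2 j - f g3 j - f g4 j)).
Proof.
have excess_ge0 q : 0 <= excess q.
  by rewrite /excess; case: ifP => _; [exact: Cnorm2_ge0 | exact: Rle_refl].
rewrite (Rsum_eq0 excess_ge0).
split=> [ex0 g1 g2 g3 g4 bal ntriv | cond [[g3 g4] [g1 g2]]].
  pose q := ((g3, g4), (g1, g2)).
  apply/(charsum_eq0 Hd')/Cnorm2_eq0; have := ex0 q.
  by rewrite /excess (introT (balancedP q) bal) (introF (trivialP q) ntriv).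
rewrite /excess; case: (balancedP _) => [bal | _] //=; case: (trivialP _) => [// | ntriv] /=.
by rewrite (proj2 (charsum_eq0 Hd' _) (cond _ _ _ _ bal ntriv)) /Cnorm2 /=; ring.
Qed.

Lemma Cmod_inv_sqrt (z : Cplx) : Cmod z = 1 / sqrt (INR #|G|) <-> Cnorm2 z = / INR n.
Proof.
have np := n_pos.
have -> : 1 / sqrt (INR #|G|) = sqrt (/ INR n) by rewrite HG sqrt_inv /Rdiv Rmult_1_l.
rewrite Cmod_Cnorm2; split=> [| -> //].
by apply: sqrt_inj; [exact: Cnorm2_ge0 | apply/Rlt_le/Rinv_0_lt_compat].
Qed.

(* Each M_r is a complex Hadamard matrix and r |-> M_r is injective as soon
   as the M_r are pairwise unbiased; so completeness reduces to unbiasedness. *)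
Lemma complete_MUH_iff :
  complete_MUH (@Mr m m' d d' n f) <->
  (forall r r' : N, r <> r' -> forall k k', Cnorm2 (cross r r' k k') = / INR n).
Proof.
have np := n_pos.
split=> [[_ [_ [_ unbiased]]] r r' rr' k k' | unbiased].
  exact/Cmod_inv_sqrt/unbiased.
split; first by rewrite HG HN.
split; last split.
- move=> r r' same; case: (eqVneq r r') => [// | /eqP rr'].
  pose k0 : G := [ffun j => Ordinal (Hd j)].
  have := unbiased r r' rr' k0 k0.
  have -> : cross r r' k0 k0 = cross r r k0 k0 by apply: Csum_ext => l; rewrite same.
  rewrite cross_diag eqxx /Cnorm2 /= => inv1.
  have n1 : INR n = INR 1 by rewrite /= -[INR n]Rinv_inv -inv1; field.
  have /fintype_le1P all_eq : (#|N| <= 1)%nat by rewrite HN (INR_eq _ _ n1).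
  exact: esym (all_eq r r').
- move=> r; split=> [k k' | l k].
    by rewrite eq_sym; exact: cross_diag.
  apply/Cmod_inv_sqrt; rewrite /Mr Cnorm2_scale Cnorm2_mul chiG_phase chiN_phase.
  by rewrite !Cnorm2_Cexpi (inv_sqrt_sq np); ring.
- by move=> r r' rr' k k'; apply/Cmod_inv_sqrt/unbiased.
Qed.

End MutuallyUnbiased.

Theorem theorem11 (m m' : nat) (d : 'I_m -> nat) (d' : 'I_m' -> nat) (n : nat)
  (Hd : forall j, (0 < d j)%nat) (Hd' : forall j, (0 < d' j)%nat)
  (HnG : (\prod_(j < m) d j)%nat = n) (HnN : (\prod_(j < m') d' j)%nat = n)
  (f : Zprod d -> ('I_m' -> R)) :
  complete_MUH (@Mr m m' d d' n f) <->
  (forall g1 g2 g3 g4 : Zprod d,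
     Zsum_eq g1 g2 g3 g4 ->
     ~ ((g1 = g3 /\ g2 = g4) \/ (g1 = g4 /\ g2 = g3)) ->
     in_Nstar d' (fun j => (f g1 j + f g2 j - f g3 j - f g4 j)%R)).
Proof.
have HG : #|Zprod d| = n by rewrite card_Zprod.
have HN : #|Zprod d'| = n by rewrite card_Zprod.
rewrite (complete_MUH_iff Hd HG HN) (unbiased_iff_excess Hd Hd' HG HN).
exact: excess_eq0.
Qed.
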